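(* Let $N\geq1$, let $\mathcal{H}_{X_1},\dots,\mathcal{H}_{X_N}$ be finite-dimensional Hilbert spaces and let $\rho=|V\rangle\langle V|$ be a pure state on $\mathcal{H}_{X_1}\otimes\cdots\otimes\mathcal{H}_{X_N}$. For each $i$, let $\lambda^i_1\geq\lambda^i_2\geq\cdots$ be the eigenvalues of $\rho_{X_i}$ in decreasing order and $|e^i_1\rangle,|e^i_2\rangle,\dots$ a corresponding orthonormal eigenbasis of $\mathcal{H}_{X_i}$. Write $|V\rangle=\sum_{x_1,\dots,x_N}V_{x_1\dots x_N}|e^1_{x_1}\rangle\otimes\cdots\otimes|e^N_{x_N}\rangle$, and set $\epsilon_i=1-\lambda^i_1$ and $\varepsilon=\sum_{i=1}^N\epsilon_i$. Then $$(1-\epsilon_1)\sum_{x_1>1}|V_{x_1 1\dots1}|^2\leq\epsilon_1(\varepsilon-\epsilon_1).$$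
   Context: $\rho_{X_i}$ denotes the partial trace of $\rho$ over all tensor factors except $\mathcal{H}_{X_i}$. The sum runs over $x_1=2,\dots,\dim\mathcal{H}_{X_1}$ with all other indices equal to $1$. *)

From HB Require Import structures.
From mathcomp Require Import all_boot all_order all_algebra.
Set Implicit Arguments. Unset Strict Implicit. Unset Printing Implicit Defensive.
Import Order.TTheory GRing.Theory Num.Theory.
Local Open Scope ring_scope.

(* The tensor factor i has dimension (d i).+1 (nonzero Hilbert spaces); basis
   index 1 of the paper is ord0.  Multi-indices of the N-fold tensor product: *)
Definition mindex (N : nat) (d : 'I_N -> nat) :=
  {dffun forall i : 'I_N, 'I_(d i).+1}.

(* A vector of H_{X_1} (x) ... (x) H_{X_N}, given by its coordinates in the
   standard product basis. *)
Definition tvec (C : numClosedFieldType) (N : nat) (d : 'I_N -> nat) :=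
  mindex d -> C.

(* Reduced density matrix rho_{X_i} = Tr_{all but X_i} |W><W|, in the standard
   basis of H_{X_i}: (rho_i)_{a b} = sum_z W_(a,z) conj(W_(b,z)). *)
Definition rho_red (C : numClosedFieldType) (N : nat) (d : 'I_N -> nat)
    (W : tvec C d) (i : 'I_N) : 'M[C]_((d i).+1) :=
  \matrix_(a, b)
    \sum_(y : mindex d | y i == a)
      \sum_(y' : mindex d | (y' i == b) && [forall j, (j != i) ==> (y' j == y j)])
        W y * (W y')^*.

Definition unitary_mx (C : numClosedFieldType) (n : nat) (U : 'M[C]_n) : Prop :=
  (map_mx Num.conj U^T) *m U = 1%:M.

Definition sorted_eigenbasis (C : numClosedFieldType) (n : nat)
    (A U : 'M[C]_n.+1) (lam : 'I_n.+1 -> C) : Prop :=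
  [/\ unitary_mx U,
      forall k : 'I_n.+1, A *m col k U = lam k *: col k U
    & forall k l : 'I_n.+1, (k <= l)%N -> lam l <= lam k].

(* Coefficients of W in the product basis e^1_{x_1} (x) ... (x) e^N_{x_N},
   where e^i_k is column k of U i:  V_x = <e_x | W>. *)
Definition coeffs (C : numClosedFieldType) (N : nat) (d : 'I_N -> nat)
    (U : forall i : 'I_N, 'M[C]_((d i).+1)) (W : tvec C d) (x : mindex d) : C :=
  \sum_(y : mindex d) (\prod_(i : 'I_N) (U i (y i) (x i))^*) * W y.

(* In the eigenbases, the coefficient vector V has diagonal reduced density
   matrices: sum_{y_i = a} V_y conj(V_{y[i:=b]}) = delta_ab lambda^i_b.  Fix a factor i and
   a != 1, and let x_a be the index with a in slot i and 1 elsewhere.  The vanishing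
   entry (a, 1) writes V_{x_a} conj(V_{x_1}) as minus a sum over the other y with
   y_i = a, so Cauchy-Schwarz gives
     |V_{x_a}|^2 |V_{x_1}|^2 <= (lambda_a - |V_{x_a}|^2) (lambda_1 - |V_{x_1}|^2),
   that is lambda_1 |V_{x_a}|^2 <= lambda_a (lambda_1 - |V_{x_1}|^2).  Summing over
   a != 1 gives (1 - eps_i) sum_a |V_{x_a}|^2 <= eps_i (lambda_1 - |V_{x_1}|^2), and
   lambda_1 - |V_{x_1}|^2 is the weight of the y != x_1 with y_i = 1; each of them has
   y_j != 1 for some j != i, so this weight is at most sum_{j != i} eps_j. *)

From HB Require Import structures.
From mathcomp Require Import all_boot all_order all_algebra.
From mathcomp Require Import ring.
Import Order.TTheory GRing.Theory Num.Theory.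

Local Open Scope ring_scope.
Local Open Scope sesquilinear_scope.

Lemma bigA_distr_dffun (R : comPzSemiRingType) (I : finType) (T : I -> finType)
    (F : forall i, T i -> R) :
  \sum_(x : {dffun forall i, T i}) \prod_i F i (x i) = \prod_i \sum_(k : T i) F i k.
Proof.
rewrite (reindex (@dffun_of_fprod I T)); last exact/onW_bij/dffun_of_fprod_bij.
transitivity (\sum_(t : fprod T | predT (fprod_fun t))
                \prod_i [ffun k => F i k] (t i)).
  by apply: eq_bigr => t _; apply: eq_bigr => i _; rewrite !ffunE.
rewrite (@big_fprod_dep R 0 1 *%R +%R I T (fun i => [ffun k => F i k]) predT).
under [RHS]eq_bigr => i _ do
  rewrite -(eq_bigr _ (fun k _ => ffunE (F i) k)) (big_tag (fun i => [ffun k => F i k])).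
by rewrite bigA_distr_big_dep; apply: eq_bigl => g; rewrite andbT.
Qed.

Lemma CauchySchwarz_sumC (C : numClosedFieldType) (I : finType) (P : pred I)
    (f h : I -> C) :
  `|\sum_(i | P i) f i * (h i)^*| ^+ 2 <=
  (\sum_(i | P i) `|f i| ^+ 2) * (\sum_(i | P i) `|h i| ^+ 2).
Proof.
pose D i j := f i * h j - f j * h i.
pose c i := f i * (h i)^*.
have Lagrange i j : `|D i j| ^+ 2 =
    `|f i| ^+ 2 * `|h j| ^+ 2 + `|f j| ^+ 2 * `|h i| ^+ 2 - c i * (c j)^* - c j * (c i)^*.
  by rewrite /D /c !normCK !rmorphB !rmorphM /= !conjCK; ring.
have sum2 (G : I -> I -> C) :
    \sum_(i | P i) \sum_(j | P j) (G i j + G j i)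
    = (\sum_(i | P i) \sum_(j | P j) G i j) *+ 2.
  under eq_bigr => i _ do rewrite big_split.
  by rewrite big_split /= [X in _ + X]exchange_big.
have : 0 <= \sum_(i | P i) \sum_(j | P j) `|D i j| ^+ 2.
  by apply: sumr_ge0 => i _; apply: sumr_ge0 => j _; apply: exprn_ge0.
under eq_bigr => i _ do under eq_bigr => j _ do rewrite Lagrange -addrA -opprD.
under eq_bigr => i _ do rewrite sumrB; rewrite sumrB.
rewrite (sum2 (fun i j => `|f i| ^+ 2 * `|h j| ^+ 2)) (sum2 (fun i j => c i * (c j)^*)) /=.
rewrite -!mulrnBl pmulrn_lge0 // subr_ge0 normCK rmorph_sum big_distrlr /=.
by rewrite big_distrlr.
Qed.

Lemma prodr_natb (R : comPzSemiRingType) (I : finType) (P B : pred I) :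
  \prod_(i | P i) ((B i)%:R : R) = [forall i, P i ==> B i]%:R.
Proof.
case: forallP => [allB|/forallP/forallPn[i]].
  by rewrite big1 // => i /(implyP (allB i)) ->.
by rewrite negb_imply => /andP[Pi /negbTE Bi]; rewrite (bigD1 i) //= Bi mul0r.
Qed.

Section MultiIndex.
Context {C : numClosedFieldType} {N : nat} {d : 'I_N -> nat}.
Implicit Types (x y : mindex d) (i j : 'I_N) (W : tvec C d).

Definition upd x i (b : 'I_(d i).+1) : mindex d := [ffun j => dfwith x b j].

Lemma upd_eq x i b : upd x i b i = b.
Proof. by rewrite ffunE dfwith_in. Qed.

Lemma upd_neq x i b j : j != i -> upd x i b j = x j.
Proof. by rewrite eq_sym => ij; rewrite ffunE dfwith_out. Qed.

Lemma upd_id x i : upd x i (x i) = x.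
Proof.
apply/ffunP => j; have [->|ji] := eqVneq j i; first by rewrite upd_eq.
by rewrite upd_neq.
Qed.

Lemma upd_upd x i a b : upd (upd x i a) i b = upd x i b.
Proof.
apply/ffunP => j; have [->|ji] := eqVneq j i; first by rewrite !upd_eq.
by rewrite !upd_neq.
Qed.

Lemma eq_updE x y i b :
  ((y i == b) && [forall j, (j != i) ==> (y j == x j)]) = (y == upd x i b).
Proof.
apply/andP/eqP => [[/eqP yib /forallP yx]|->]; last first.
  by rewrite upd_eq; split=> //; apply/forallP => j; apply/implyP => /upd_neq ->.
apply/ffunP => j; have [->|ji] := eqVneq j i; first by rewrite upd_eq.
by rewrite upd_neq // (eqP (implyP (yx j) ji)).
Qed.

Lemma rho_redE W i a b :
  rho_red W i a b = \sum_(y : mindex d | y i == a) W y * (W (upd y i b))^*.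
Proof.
rewrite mxE; apply: eq_bigr => y _.
by rewrite (big_pred1 (upd y i b)) // => y'; rewrite /= eq_updE.
Qed.

Lemma sum_fiber_upd i a b (F : mindex d -> C) :
  \sum_(y : mindex d | y i == a) F (upd y i b) = \sum_(z : mindex d | z i == b) F z.
Proof.
rewrite [RHS](reindex_onto (fun y => upd y i b) (fun z => upd z i a)); last first.
  by move=> z /eqP <-; rewrite upd_upd upd_id.
apply: eq_bigl => y; rewrite upd_eq eqxx upd_upd.
by apply/eqP/eqP => [<-|<-]; rewrite ?upd_eq ?upd_id.
Qed.

Lemma mxtrace_rho_red W i : \tr (rho_red W i) = \sum_(y : mindex d) `|W y| ^+ 2.
Proof.
rewrite [RHS](partition_big (fun y => y i) predT) //.
apply: eq_bigr => a _; rewrite rho_redE.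
by apply: eq_bigr => y /eqP <-; rewrite upd_id normCK.
Qed.

Definition mindex0 : mindex d := finfun (fun j => ord0).

Lemma mindex0E j : mindex0 j = ord0.
Proof. by rewrite ffunE. Qed.

Lemma sum_axis i (F : mindex d -> C) :
  \sum_(x : mindex d | (x i != ord0) && [forall j, (j != i) ==> (x j == ord0)]) F x
  = \sum_(a : 'I_(d i).+1 | a != ord0) F (upd mindex0 i a).
Proof.
rewrite (partition_big (fun x : mindex d => x i) (fun a => a != ord0)) => [|x /andP[] //].
apply: eq_bigr => a a0; rewrite (big_pred1 (upd mindex0 i a)) // => x /=.
rewrite -eq_updE; have [->|_] := eqVneq (x i) a; last by rewrite !andbF.
by move: a0; rewrite andbT => -> /=; apply: eq_forallb => j; rewrite mindex0E.
Qed.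

Lemma sum_agree_off y i (G : mindex d -> C) :
  \sum_(y' : mindex d) [forall j, (j != i) ==> (y' j == y j)]%:R * G y'
  = \sum_(l : 'I_(d i).+1) G (upd y i l).
Proof.
rewrite (partition_big (fun y' : mindex d => y' i) predT) //=.
apply: eq_bigr => l _; rewrite (bigD1 (upd y i l)) ?upd_eq //=.
rewrite big1 => [|y' /andP[y'l y'y]].
  have := eq_updE y (upd y i l) i l; rewrite upd_eq eqxx /= => ->.
  by rewrite eqxx mul1r addr0.
by have := eq_updE y y' i l; rewrite y'l /= => ->; rewrite (negbTE y'y) mul0r.
Qed.

Lemma mulmx_conj_rho_redE W i (A : 'M[C]_((d i).+1)) a b :
  (A^t* *m rho_red W i *m A) a b =
  \sum_(y : mindex d) \sum_(l : 'I_(d i).+1)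
    W y * (W (upd y i l))^* * ((A (y i) a)^* * A l b).
Proof.
rewrite mxE exchange_big /=; apply: eq_bigr => l _.
rewrite mxE mulr_suml [RHS](partition_big (fun y : mindex d => y i) predT) //=.
apply: eq_bigr => k _; rewrite rho_redE !mxE mulr_sumr mulr_suml.
by apply: eq_bigr => y /eqP yk; rewrite yk; ring.
Qed.

End MultiIndex.

Section LocalUnitaries.
Context {C : numClosedFieldType} {N : nat} {d : 'I_N -> nat}.
Variable U : forall i : 'I_N, 'M[C]_((d i).+1).
Hypothesis U_unitary : forall i, U i \is unitarymx.

Lemma sum_rows_tensor_upd (y y' : mindex d) i a b :
  \sum_(x : mindex d | x i == a)
     (\prod_j (U j (y j) (x j))^*) * (\prod_j (U j (y' j) (upd x i b j))^*)^*
  = [forall j, (j != i) ==> (y' j == y j)]%:R * ((U i (y i) a)^* * U i (y' i) b).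
Proof.
set c := (U i (y i) a)^* * U i (y' i) b.
(* The sum factorizes over the tensor factors; factor j != i is the inner product
   of rows y j and y' j of the unitary U j.  Indices are compared through val
   since k and a have different ordinal types when j != i. *)
pose F j (k : 'I_(d j).+1) :=
  if j == i then (val k == val a)%:R * c else (U j (y j) k)^* * U j (y' j) k.
transitivity (\sum_(x : mindex d) \prod_j F j (x j)).
  rewrite big_mkcond; apply: eq_bigr => x _.
  rewrite rmorph_prod -big_split /= (bigD1 i) //= [in RHS](bigD1 i) //= /F eqxx.
  have [->|xia] := eqVneq (x i) a.
    rewrite eqxx mul1r upd_eq conjCK; congr (_ * _).
    by apply: eq_bigr => j ji; rewrite (negbTE ji) upd_neq // conjCK.
  by rewrite val_eqE (negbTE xia) !mul0r.
rewrite bigA_distr_dffun (bigD1 i) //= /F eqxx.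
rewrite (bigD1 a) //= eqxx mul1r big1 ?addr0 => [|k ka]; last first.
  by rewrite val_eqE (negbTE ka) mul0r.
rewrite mulrC -prodr_natb; congr (_ * _); apply: eq_bigr => j ji.
have /matrixP/(_ (y' j) (y j)) := unitarymxP (U_unitary j).
by rewrite (negbTE ji) !mxE => <-; apply: eq_bigr => k _; rewrite !mxE mulrC.
Qed.

Lemma rho_red_coeffs W i : rho_red (coeffs U W) i = (U i)^t* *m rho_red W i *m U i.
Proof.
apply/matrixP => a b; rewrite mulmx_conj_rho_redE rho_redE /coeffs.
under eq_bigr => x _ do rewrite rmorph_sum big_distrlr /=.
rewrite exchange_big; apply: eq_bigr => y _; rewrite exchange_big /=.
under [RHS]eq_bigr => l _ do rewrite -[l in U i l b](upd_eq y i l).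
rewrite -(sum_agree_off y i (fun y' => W y * (W y')^* * ((U i (y i) a)^* * U i (y' i) b))).
apply: eq_bigr => y' _.
transitivity (W y * (W y')^* * \sum_(x : mindex d | x i == a)
  (\prod_j (U j (y j) (x j))^*) * (\prod_j (U j (y' j) (upd x i b j))^*)^*).
  by rewrite mulr_sumr; apply: eq_bigr => x _; rewrite rmorphM /=; ring.
by rewrite sum_rows_tensor_upd; ring.
Qed.

End LocalUnitaries.

Section Eigenbasis.
Context {C : numClosedFieldType} {n : nat}.
Implicit Types (A U : 'M[C]_n.+1) (lam : 'I_n.+1 -> C).

Lemma sorted_eigenbasis_unitary {A U lam} :
  sorted_eigenbasis A U lam -> U \is unitarymx.
Proof. by case=> UU _ _; rewrite -trmxC_unitary; apply/unitarymxP; rewrite trmxCK. Qed.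

Lemma sorted_eigenbasis_diag {A U lam} :
  sorted_eigenbasis A U lam -> U^t* *m A *m U = diag_mx (\row_k lam k).
Proof.
case=> UU AU _; have AUE : A *m U = U *m diag_mx (\row_k lam k).
  apply/matrixP => r k; rewrite mul_mx_diag !mxE mulrC.
  have /colP/(_ r) := AU k; rewrite !mxE => <-.
  by apply: eq_bigr => l _; rewrite !mxE.
by rewrite -mulmxA AUE mulmxA UU mul1mx.
Qed.

End Eigenbasis.

Section DiagonalMarginals.
Context {C : numClosedFieldType} {N : nat} {d : 'I_N -> nat}.
Context {V : tvec C d} {lam : forall i : 'I_N, 'I_(d i).+1 -> C}.
Hypothesis rho_red_diag : forall i, rho_red V i = diag_mx (\row_k lam i k).
Hypothesis normV : \sum_(y : mindex d) `|V y| ^+ 2 = 1.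
Implicit Types (x y : mindex d) (i j : 'I_N).

Lemma lam_fiber i a : lam i a = \sum_(y : mindex d | y i == a) `|V y| ^+ 2.
Proof.
have := rho_red_diag i => /matrixP/(_ a a); rewrite rho_redE !mxE eqxx mulr1n => <-.
by apply: eq_bigr => y /eqP <-; rewrite upd_id normCK.
Qed.

Lemma one_sub_lam_fiber i a : 1 - lam i a = \sum_(y : mindex d | y i != a) `|V y| ^+ 2.
Proof. by rewrite lam_fiber -normV (bigID (fun y => y i == a)) /= addrC addrK. Qed.

Lemma sum_fiber_upd_neq i a b : a != b ->
  \sum_(y : mindex d | y i == a) V y * (V (upd y i b))^* = 0.
Proof.
have := rho_red_diag i => /matrixP/(_ a b); rewrite rho_redE !mxE => -> ab.
by rewrite (negbTE ab) mulr0n.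
Qed.

Lemma sum_lam i : \sum_(a : 'I_(d i).+1) lam i a = 1.
Proof.
rewrite -normV (partition_big (fun y : mindex d => y i) predT) //.
by apply: eq_bigr => a _; rewrite lam_fiber.
Qed.

Lemma one_sub_lam_sum i a : 1 - lam i a = \sum_(b : 'I_(d i).+1 | b != a) lam i b.
Proof. by rewrite -(sum_lam i) (bigD1 a) //= addrC addrK. Qed.

Lemma fiber_CauchySchwarz i x b : x i != b ->
  lam i b * `|V x| ^+ 2 <= lam i (x i) * (lam i b - `|V (upd x i b)| ^+ 2).
Proof.
move=> xib; set g := `|V x| ^+ 2; set p := `|V (upd x i b)| ^+ 2.
have other_a : \sum_(y : mindex d | (y i == x i) && (y != x)) `|V y| ^+ 2
               = lam i (x i) - g.
  by rewrite (lam_fiber i (x i)) [in RHS](bigD1 x) //= addrC addrK.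
have other_b : \sum_(y : mindex d | (y i == x i) && (y != x)) `|V (upd y i b)| ^+ 2
               = lam i b - p.
  rewrite lam_fiber -(sum_fiber_upd i (x i) b (fun z => `|V z| ^+ 2)).
  by rewrite [in RHS](bigD1 x) //= addrC addrK.
have CS : g * p <= (lam i (x i) - g) * (lam i b - p).
  have := sum_fiber_upd_neq i _ _ xib; rewrite (bigD1 x) //= => /eqP.
  rewrite addr_eq0 => /eqP Vx; rewrite -other_a -other_b /g /p -exprMn.
  rewrite -(norm_conjC (V (upd x i b))) -normrM Vx normrN.
  exact: CauchySchwarz_sumC.
rewrite -subr_ge0 (_ : _ - _ = (lam i (x i) - g) * (lam i b - p) - g * p) ?subr_ge0 //.
by ring.
Qed.

Lemma lam_ord0_sub_le i :
  lam i ord0 - `|V mindex0| ^+ 2 <= \sum_(j | j != i) (1 - lam j ord0).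
Proof.
have g0 (y : mindex d) j : 0 <= if y j != ord0 then `|V y| ^+ 2 else 0.
  by case: ifP => _ //; apply: exprn_ge0.
rewrite lam_fiber (bigD1 mindex0) ?mindex0E //= addrC addrK.
apply: (@le_trans _ _ (\sum_(y : mindex d) \sum_(j | j != i)
                         if y j != ord0 then `|V y| ^+ 2 else 0)).
  rewrite [X in _ <= X](bigID (fun y : mindex d => (y i == ord0) && (y != mindex0))) /=.
  rewrite -[X in X <= _]addr0 lerD ?sumr_ge0 // => [|y _]; last exact: sumr_ge0.
  apply: ler_sum => y /andP[yi0 y_ne0].
  have [j yj0] : exists j, y j != ord0.
    apply/existsP; apply: contraR y_ne0 => /existsPn yj0.
    by apply/eqP/ffunP => j; rewrite mindex0E; apply/eqP/negbNE/yj0.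
  have ji : j != i by apply: contraNneq yj0 => ->.
  by rewrite (bigD1 j) //= yj0 lerDl sumr_ge0.
rewrite exchange_big; apply: ler_sum => j _.
by rewrite one_sub_lam_fiber [X in _ <= X]big_mkcond.
Qed.

Lemma diag_marginal_bound i :
  lam i ord0 *
    (\sum_(x : mindex d | (x i != ord0) && [forall j, (j != i) ==> (x j == ord0)])
        `|V x| ^+ 2)
  <= (1 - lam i ord0) * (\sum_j (1 - lam j ord0) - (1 - lam i ord0)).
Proof.
set B := lam i ord0 - `|V mindex0| ^+ 2.
apply: le_trans (_ : _ <= (1 - lam i ord0) * B) _.
  rewrite sum_axis mulr_sumr one_sub_lam_sum mulr_suml; apply: ler_sum => a a0.
  have := @fiber_CauchySchwarz i (upd mindex0 i a) ord0.
  by rewrite upd_eq upd_upd -[in upd mindex0 i ord0](mindex0E i) upd_id; apply.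
rewrite (bigD1 i) //= addrC addrK; apply: ler_wpM2l; last exact: lam_ord0_sub_le.
by rewrite one_sub_lam_fiber sumr_ge0 // => y _; apply: exprn_ge0.
Qed.

End DiagonalMarginals.

Theorem lemma3 (C : numClosedFieldType) (N : nat) (hN : (0 < N)%N)
    (d : 'I_N -> nat) (W : tvec C d)
    (hW : \sum_(y : mindex d) `|W y| ^+ 2 = 1)
    (U : forall i : 'I_N, 'M[C]_((d i).+1))
    (lam : forall i : 'I_N, 'I_(d i).+1 -> C)
    (hU : forall i : 'I_N, sorted_eigenbasis (rho_red W i) (U i) (lam i)) :
  let i1 : 'I_N := Ordinal hN in
  let eps := fun i : 'I_N => 1 - lam i ord0 in
  let veps := \sum_(i : 'I_N) eps i in
  (1 - eps i1) *
    (\sum_(x : mindex d | (x i1 != ord0) && [forall j, (j != i1) ==> (x j == ord0)])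
        `|coeffs U W x| ^+ 2)
  <= eps i1 * (veps - eps i1).
Proof.
cbv zeta; set i1 := Ordinal hN.
have U_unitary i : U i \is unitarymx := sorted_eigenbasis_unitary (hU i).
have rho_red_V i : rho_red (coeffs U W) i = diag_mx (\row_k lam i k).
  by rewrite rho_red_coeffs // (sorted_eigenbasis_diag (hU i)).
have normV : \sum_(y : mindex d) `|coeffs U W y| ^+ 2 = 1.
  rewrite -(mxtrace_rho_red _ i1) rho_red_coeffs // mxtrace_mulC mulmxA.
  by rewrite (unitarymxP (U_unitary i1)) mul1mx mxtrace_rho_red hW.
by rewrite subKr; apply: diag_marginal_bound rho_red_V normV i1.
Qed.
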